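(* Let $q$ be a power of $2$ and $k\ge 1$ an integer, and let $S_{2k}=x+x^q+\cdots+x^{q^{2k-1}}\in\mathbb{F}_2[x]$. Let $L\in\mathbb{F}_{q^{3k}}[x]$ be a $2$-linearized polynomial (i.e. $L=\sum_i a_i x^{2^i}$ with $a_i\in\mathbb{F}_{q^{3k}}$) such that (i) $L$ permutes $\mathbb{F}_{q^k}$ (that is, $x\mapsto L(x)$ is a bijection $\mathbb{F}_{q^k}\to\mathbb{F}_{q^k}$), and (ii) $L(x)+L(x)^{q^{2k}}\equiv S_{2k}(x)^4 \pmod{x^{q^{3k}}-x}$. Then $L(x)+S_{2k}(x)^{q^k+3}$ is a permutation polynomial of $\mathbb{F}_{q^{3k}}$.
   Context: $\mathbb{F}_m$ denotes the finite field with $m$ elements. A polynomial $f\in\mathbb{F}_m[x]$ is a permutation polynomial of $\mathbb{F}_m$ if the induced map $x\mapsto f(x)$ is a bijection of $\mathbb{F}_m$. Here $\mathbb{F}_{q^k}\subset\mathbb{F}_{q^{3k}}$ is the subfield of order $q^k$. *)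

From HB Require Import structures.
From mathcomp Require Import all_boot all_order all_algebra all_field.
Set Implicit Arguments. Unset Strict Implicit. Unset Printing Implicit Defensive.
Import GRing.Theory.
Local Open Scope ring_scope.

(* The subfield of order m inside a finite field F (meaningful when
   F has order a power of m): the elements fixed by x |-> x^m. *)
Definition subfield_of_order (F : finFieldType) (m : nat) : pred F :=
  [pred x : F | x ^+ m == x].

Definition is_2linearized (F : finFieldType) (p : {poly F}) : Prop :=
  forall i : nat, p`_i != 0 -> exists j : nat, i = (2 ^ j)%N.

Definition is_perm_poly (F : finFieldType) (p : {poly F}) : Prop :=
  bijective (fun x : F => p.[x]).

Definition S_poly (F : finFieldType) (q n : nat) : {poly F} :=
  \sum_(i < n) 'X^(q ^ i).

From HB Require Import structures.
From mathcomp Require Import all_boot all_order all_algebra all_field.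
From mathcomp Require Import zify ring.
Set Implicit Arguments. Unset Strict Implicit. Unset Printing Implicit Defensive.
Import GRing.Theory.
Local Open Scope ring_scope.

(* Proof of Theorem 3.1.  Write q = 2^e, P = q^k and sigma(x) = x^P; since
   #|F| = P^3, sigma is an automorphism of F of order dividing 3, and F has
   characteristic 2.  For u in F put z = S_2k(u) and f(u) = L(u) + z^(P+3).
   - S_2k(u) = t + sigma t with t = S_k(u), hence sigma^2 z = z + sigma z;
   - together with hypothesis (ii), L(u) + sigma^2 L(u) = z^4, this gives
     f + sigma^2 f = twist z := z (sigma z)^2 sigma^2 z;
   - twist is injective: the norm z sigma(z) sigma^2(z) of twist z is the
     fourth power of the norm of z, and twist z = norm z * sigma z.
   So f(x) = f(y) forces S_2k(x) = S_2k(y) and then L(x) = L(y).  The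
   difference d = x + y is a root of S_2k, so d^(q^2k) = d by the telescoping
   identity x + S_n(x)^q = S_n(x) + x^(q^n); as sigma^3 = id, d lies in the
   subfield F_(q^k), where L is injective with L(0) = 0, whence d = 0.
   The file first collects Frobenius facts in characteristic p, then the
   algebra of sigma, culminating in the abstract criterion twisted_sum_inj,
   then the identities for S_n; the theorem instantiates the criterion with
   G = L and H = S_2k.  Only injectivity of L on F_(q^k) is needed, and
   injectivity of a self-map of the finite set F gives bijectivity. *)

Lemma pchar2_nat_exp2 (R : nzRingType) (j : nat) :
  2 \in [pchar R] -> [pchar R].-nat (2 ^ j)%N.
Proof. by move=> R_pchar2; rewrite pnatX (@pnatE _ 2) ?R_pchar2. Qed.

Lemma expr_pchar_inj (R : idomainType) (m : nat) :
  [pchar R].-nat m -> injective (fun x : R => x ^+ m).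
Proof.
move=> m_pchar x y /= exy; apply/eqP; rewrite -subr_eq0.
have := exprDn_pchar (x - y) y m_pchar; rewrite subrK exy.
rewrite -{1}[y ^+ m]add0r => /addIr /esym /eqP.
by rewrite expf_eq0 => /andP[].
Qed.

Lemma horner_2linearizedD (F : finFieldType) (L : {poly F}) :
  2 \in [pchar F] -> is_2linearized L -> {morph (fun x => L.[x]) : x y / x + y}.
Proof.
move=> F_pchar2 L_lin x y /=; rewrite !horner_coef -big_split.
apply: eq_bigr => i _ /=.
have [->|L_i_neq0] := eqVneq L`_i 0; first by rewrite !mul0r addr0.
have [j ->] := L_lin _ L_i_neq0.
by rewrite exprDn_pchar ?pchar2_nat_exp2 // mulrDr.
Qed.

(* Every element of F is a root of X^#|F| - X, so a congruence modulo this
   polynomial is an equality of polynomial functions on F. *)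
Lemma horner_eq_mod_XqX (F : finFieldType) (p r : {poly F}) :
  ('X^#|F| - 'X) %| p - r -> forall x, p.[x] = r.[x].
Proof.
case/dvdpP=> s def_pr x; move: (congr1 (horner^~ x) def_pr).
rewrite /= hornerM !hornerD !hornerN hornerXn hornerX expf_card subrr mulr0.
by move/eqP; rewrite subr_eq0 => /eqP.
Qed.

(* Identities in characteristic 2 are checked as identities up to a multiple
   of 2. *)
Lemma eq_mod2 (R : nzRingType) (x y t : R) :
  2 \in [pchar R] -> x = y + 2%:R * t -> x = y.
Proof. by move=> R_pchar2 ->; rewrite pcharf0 // mul0r addr0. Qed.

Section CubicFrobenius.

Variables (F : finFieldType) (P : nat).
Hypotheses (F_pchar2 : 2 \in [pchar F]) (P_pchar : [pchar F].-nat P).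
Hypothesis sigma3 : forall x : F, x ^+ P ^+ P ^+ P = x.

Lemma sigmaD (x y : F) : (x + y) ^+ P = x ^+ P + y ^+ P.
Proof. exact: exprDn_pchar. Qed.

Lemma sigma_inj : injective (fun x : F => x ^+ P).
Proof. exact: (@can_inj _ _ _ (fun x : F => x ^+ P ^+ P) sigma3). Qed.

Lemma sigma2_fixed (x : F) : x ^+ P ^+ P = x -> x ^+ P = x.
Proof. by move=> fix2; rewrite -{2}(sigma3 x) fix2. Qed.

Lemma sigma2_trace (t : F) :
  (t + t ^+ P) ^+ P ^+ P = (t + t ^+ P) + (t + t ^+ P) ^+ P.
Proof.
rewrite !sigmaD sigma3; apply: (eq_mod2 F_pchar2 (t := - t ^+ P)).
by move: (t ^+ P) (t ^+ P ^+ P) => s s2; ring.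
Qed.

(* The relative norm of F over the fixed field of sigma, and the twisted
   product z (sigma z)^2 sigma^2 z appearing in f + sigma^2 f. *)
Definition norm3 (z : F) : F := z * z ^+ P * z ^+ P ^+ P.
Definition twist (z : F) : F := z * (z ^+ P) ^+ 2 * z ^+ P ^+ P.

Lemma norm3_eq0 (z : F) : (norm3 z == 0) = (z == 0).
Proof.
have P_gt0 : (0 < P)%N by case/andP: P_pchar.
by rewrite /norm3 !mulf_eq0 !expf_eq0 P_gt0 !orbb.
Qed.

Lemma twistE (z : F) : twist z = norm3 z * z ^+ P.
Proof. by rewrite /twist /norm3; ring. Qed.

Lemma norm3_twist (z : F) : norm3 (twist z) = norm3 z ^+ 4.
Proof. by rewrite /norm3 /twist !exprMn !sigma3; ring. Qed.

(* twist is injective: the fourth power determines the norm (Frobenius is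
   injective), and then twist z / norm3 z = sigma z when the norm is nonzero. *)
Lemma twist_inj : injective twist.
Proof.
move=> z w twist_zw.
have Nzw : norm3 z = norm3 w.
  apply: (expr_pchar_inj (pchar2_nat_exp2 2 F_pchar2)).
  by rewrite /= -!norm3_twist twist_zw.
have [Nz0|Nz_neq0] := eqVneq (norm3 z) 0.
  move: (Nz0); rewrite Nzw => /eqP; rewrite norm3_eq0 => /eqP->.
  by apply/eqP; rewrite -norm3_eq0 Nz0.
by apply: sigma_inj; apply: (mulfI Nz_neq0); rewrite /= -twistE twist_zw twistE Nzw.
Qed.

Lemma twist_fold (l z : F) :
  l + l ^+ P ^+ P = z ^+ 4 -> z ^+ P ^+ P = z + z ^+ P ->
  let f := l + z ^+ (P + 3) in f + f ^+ P ^+ P = twist z.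
Proof.
move=> l_trace z_trace /=.
have l2E : l ^+ P ^+ P = z ^+ 4 - l by rewrite -l_trace addrAC subrr add0r.
rewrite !sigmaD ![z ^+ (P + 3) ^+ P]exprAC ![z ^+ P ^+ (P + 3) ^+ P]exprAC.
rewrite /twist !exprD sigma3 l2E z_trace.
apply: (eq_mod2 F_pchar2 (t := z ^+ 2 * (z + z ^+ P) ^+ 2)).
by move: (z ^+ P) => s; ring.
Qed.

Lemma twisted_sum_inj (G H : F -> F) :
  {morph G : x y / x + y} -> {morph H : x y / x + y} ->
  {in subfield_of_order P &, injective G} ->
  (forall d, H d = 0 -> d ^+ P ^+ P = d) ->
  (forall u, G u + G u ^+ P ^+ P = H u ^+ 4) ->
  (forall u, H u ^+ P ^+ P = H u + H u ^+ P) ->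
  injective (fun u => G u + H u ^+ (P + 3)).
Proof.
move=> G_add H_add G_inj H_roots G_trace H_trace x y /= f_xy.
have H_xy : H x = H y.
  by apply: twist_inj; rewrite -(twist_fold (G_trace x) (H_trace x)) /= f_xy twist_fold.
have G_xy : G x = G y by move: f_xy; rewrite H_xy => /addIr.
have G0 : G 0 = 0 by have := G_add 0 0; rewrite addr0 addrr_pchar2.
suff : x + y = 0 by move/eqP; rewrite addr_eq0 oppr_pchar2 // => /eqP.
have sigma_xy : (x + y) ^+ P = x + y.
  by apply/sigma2_fixed/H_roots; rewrite H_add H_xy addrr_pchar2.
have P_gt0 : (0 < P)%N by case/andP: P_pchar.
apply: G_inj; first by rewrite inE /= sigma_xy.
  by rewrite inE /= expr0n gtn_eqF.
by rewrite G0 G_add G_xy addrr_pchar2.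
Qed.

End CubicFrobenius.

Section TraceLikePolynomial.

Variables (F : finFieldType) (q : nat).
Hypothesis q_pchar : [pchar F].-nat q.

Lemma horner_S (n : nat) (x : F) :
  (S_poly F q n).[x] = \sum_(i < n) x ^+ (q ^ i).
Proof. by rewrite /S_poly horner_sum; apply: eq_bigr => i _; rewrite hornerXn. Qed.

Lemma horner_SD (n : nat) : {morph (fun x => (S_poly F q n).[x]) : x y / x + y}.
Proof.
move=> x y /=; rewrite !horner_S -big_split; apply: eq_bigr => i _.
by rewrite exprDn_pchar // pnatX q_pchar.
Qed.

Lemma horner_S_split (m n : nat) (x : F) :
  (S_poly F q (m + n)).[x] = (S_poly F q m).[x] + (S_poly F q n).[x] ^+ (q ^ m).
Proof.
have qm_pchar : [pchar F].-nat (q ^ m)%N by rewrite pnatX q_pchar.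
rewrite !horner_S big_split_ord /=; congr (_ + _).
rewrite (big_morph (fun a : F => a ^+ (q ^ m)) (id1 := 0) (op1 := +%R)
           (fun a b => exprDn_pchar a b qm_pchar)); last first.
  have q_gt0 : (0 < q)%N by case/andP: q_pchar.
  by rewrite expr0n expn_eq0 eqn0Ngt q_gt0.
by apply: eq_bigr => i _; rewrite -exprM -expnD addnC.
Qed.

Lemma horner_S_frob (n : nat) (x : F) :
  x + (S_poly F q n).[x] ^+ q = (S_poly F q n).[x] + x ^+ (q ^ n).
Proof.
have S1 : (S_poly F q 1).[x] = x by rewrite horner_S big_ord1 expn0 expr1.
transitivity (S_poly F q (1 + n)).[x]; first by rewrite horner_S_split S1 expn1.
by rewrite addnC horner_S_split S1.
Qed.

Lemma root_S_fixed (n : nat) (d : F) : (S_poly F q n).[d] = 0 -> d ^+ (q ^ n) = d.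
Proof.
have q_gt0 : (0 < q)%N by case/andP: q_pchar.
move=> Sd0; have := horner_S_frob n d.
by rewrite Sd0 expr0n gtn_eqF //= mulr0n addr0 add0r.
Qed.

End TraceLikePolynomial.

Theorem theorem3p1 (F : finFieldType) (e k : nat) (L : {poly F}) :
  (0 < e)%N -> (1 <= k)%N ->
  #|F| = ((2 ^ e)%N ^ (3 * k))%N ->
  is_2linearized L ->
  (* (i) L permutes F_{q^k} *)
  {in subfield_of_order ((2 ^ e)%N ^ k), forall x,
      L.[x] \in subfield_of_order ((2 ^ e)%N ^ k)} ->
  {in subfield_of_order ((2 ^ e)%N ^ k) &, injective (fun x => L.[x])} ->
  (forall y, y \in subfield_of_order ((2 ^ e)%N ^ k) ->
     exists2 x, x \in subfield_of_order ((2 ^ e)%N ^ k) & L.[x] = y) ->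
  (* (ii) L + L^(q^(2k)) = S_{2k}^4 mod x^(q^(3k)) - x *)
  ('X^((2 ^ e)%N ^ (3 * k)) - 'X) %|
     (L + L ^+ ((2 ^ e)%N ^ (2 * k)) - (@S_poly F (2 ^ e)%N (2 * k)) ^+ 4) ->
  is_perm_poly (L + (@S_poly F (2 ^ e)%N (2 * k)) ^+ ((2 ^ e)%N ^ k + 3)).
Proof.
move=> _ _ card_F L_lin _ L_inj _; rewrite -card_F.
have F_pchar2 : 2 \in [pchar F].
  by apply: (card_finPcharP (n := e * (3 * k))); rewrite // card_F -expnM.
set q := (2 ^ e)%N in card_F L_inj *; set P := (q ^ k)%N in L_inj *.
set S := S_poly F q (2 * k) => L_trace.
have q_pchar : [pchar F].-nat q := pchar2_nat_exp2 e F_pchar2.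
have P_pchar : [pchar F].-nat P by rewrite pnatX q_pchar.
have qP2 : (q ^ (2 * k) = P * P)%N by rewrite -expnD; congr (q ^ _)%N; lia.
have sigma3 (x : F) : x ^+ P ^+ P ^+ P = x.
  by rewrite -!exprM -{2}(expf_card x) card_F -!expnD; congr (x ^+ (q ^ _)); lia.
have L_add := horner_2linearizedD F_pchar2 L_lin.
have S_add := horner_SD q_pchar (2 * k).
have L_trace_at (u : F) : L.[u] + L.[u] ^+ P ^+ P = S.[u] ^+ 4.
  by rewrite -exprM -qP2 -!horner_exp -hornerD (horner_eq_mod_XqX L_trace).
have S_trace_at (u : F) : S.[u] ^+ P ^+ P = S.[u] + S.[u] ^+ P.
  by rewrite /S mul2n -addnn horner_S_split // sigma2_trace.
apply: injF_bij => x y /=; rewrite !hornerD !horner_exp.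
apply: (twisted_sum_inj F_pchar2 P_pchar sigma3 L_add S_add L_inj _ L_trace_at S_trace_at).
by move=> d /(root_S_fixed q_pchar); rewrite qP2 exprM.
Qed.
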